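(* Let $H$ be a complex Hilbert space, $\varphi,\psi:[0,1]\to\mathbb{R}$ continuous, $A\in\mathbb{B}(H)$ and $t\in[0,1]$. Then $$\omega_t^2(\varphi,\psi;A)\le\frac12\big(|\varphi(t)|^2+|\psi(t)|^2\big)\|A^*A+AA^*\|+|\varphi(t)\psi(t)|\,\omega\big(A^2+(A^* )^2\big).$$
   Context: $S_1(H)$ is the unit sphere of $H$, $\omega(T)=\sup_{x\in S_1(H)}|\langle Tx,x\rangle|$, and $\omega_t(\varphi,\psi;A)=\sup_{x\in S_1(H)}|\langle(\varphi(t)A+\psi(t)A^* )x,x\rangle|$. *)

From HB Require Import structures.
From mathcomp Require Import all_boot all_order all_algebra.
From mathcomp Require Import all_classical all_reals all_analysis.
From mathcomp Require Import complex.
Set Implicit Arguments. Unset Strict Implicit. Unset Printing Implicit Defensive.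
Import Order.TTheory GRing.Theory Num.Theory.
Local Open Scope classical_set_scope.
Local Open Scope ring_scope.

Record HilbertSpace (R : realType) := {
  hcar :> lmodType R[i];
  hinner : hcar -> hcar -> R[i];
  hinner_linear : forall (a : R[i]) (x y z : hcar),
      hinner (a *: x + y) z = a * hinner x z + hinner y z;
  hinner_conj : forall x y : hcar, hinner y x = conjc (hinner x y);
  hinner_pos : forall x : hcar, 0 <= complex.Re (hinner x x);
  hinner_def : forall x : hcar, hinner x x = 0 -> x = 0;
  hcomplete : forall u : nat -> hcar,
      (forall e : R, 0 < e -> exists N : nat, forall m n : nat,
          (N <= m)%N -> (N <= n)%N ->
          Num.sqrt (complex.Re (hinner (u m - u n) (u m - u n))) < e) ->
      exists l : hcar, forall e : R, 0 < e -> exists N : nat, forall n : nat,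
          (N <= n)%N -> Num.sqrt (complex.Re (hinner (u n - l) (u n - l))) < e
}.

Definition cabs (R : realType) (z : R[i]) : R :=
  Num.sqrt (complex.Re z ^+ 2 + complex.Im z ^+ 2).

Section Ops.
Variables (R : realType) (H : HilbertSpace R).

Definition inner (x y : H) : R[i] := hinner x y.
Definition hnorm (x : H) : R := Num.sqrt (complex.Re (inner x x)).
Definition unit_sphere : set H := [set x | hnorm x = 1].

Definition bounded_linear (T : H -> H) : Prop :=
  (forall (a : R[i]) (x y : H), T (a *: x + y) = a *: T x + T y) /\
  (exists M : R, forall x : H, hnorm (T x) <= M * hnorm x).

Definition is_adjoint (T S : H -> H) : Prop :=
  forall x y : H, inner (T x) y = inner x (S y).

Definition opnorm (T : H -> H) : R := sup [set hnorm (T x) | x in unit_sphere].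

Definition numrad (T : H -> H) : R :=
  sup [set cabs (inner (T x) x) | x in unit_sphere].

Definition omega_t (phi psi : R -> R) (A Astar : H -> H) (t : R) : R :=
  numrad (fun x => (phi t)%:C%C *: A x + (psi t)%:C%C *: Astar x).

End Ops.

From HB Require Import structures.
From mathcomp Require Import all_boot all_order all_algebra.
From mathcomp Require Import all_classical all_reals all_analysis.
From mathcomp Require Import complex.
From mathcomp Require Import lra.
Set Implicit Arguments. Unset Strict Implicit. Unset Printing Implicit Defensive.
Import Order.TTheory GRing.Theory Num.Theory.
Local Open Scope classical_set_scope.
Local Open Scope ring_scope.
Import numFieldNormedType.Exports.

(* Let x be a unit vector and T = a A + b A* with a, b real, so that
   T* = a A* + b A.  Cauchy-Schwarz bounds |<T x, x>|^2 by ||T x||^2, and also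
   by ||T* x||^2 since |<T x, x>| = |<T* x, x>|.  Averaging the two bounds,
     |<T x, x>|^2 <= (||T x||^2 + ||T* x||^2) / 2
                   = (a^2 + b^2)/2 <A* A x + A A* x, x> + a b Re <A^2 x + A*^2 x, x>,
   and the two terms are at most (a^2 + b^2)/2 ||A* A + A A*|| and
   |a b| omega(A^2 + A*^2). *)

Lemma sup_ge0 (R : realType) (E : set R) : (forall e, E e -> 0 <= e) -> 0 <= sup E.
Proof.
move=> E_ge0; have [[[e Ee] ubE]|/sup_out->//] := pselect (has_sup E).
exact: le_trans (E_ge0 e Ee) (ub_le_sup ubE Ee).
Qed.

Lemma sup_sqr_le (R : realType) (E : set R) (K : R) : 0 <= K ->
  (forall e, E e -> 0 <= e /\ e ^+ 2 <= K) -> sup E ^+ 2 <= K.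
Proof.
move=> K0 hE; have [->|/set0P E_neq0] := eqVneq E set0; first by rewrite sup0 expr0n.
have supE_ge0 : 0 <= sup E by apply: sup_ge0 => e /hE[].
rewrite -(sqr_sqrtr K0) ler_sqr ?nnegrE ?sqrtr_ge0 //.
apply: ge_sup => // e /hE [e0 eK].
by rewrite -(ger0_norm e0) -sqrtr_sqr ler_wsqrtr.
Qed.

Section InnerProduct.
Context {R : realType} {H : HilbertSpace R}.
Implicit Types (x y z u v : H) (w : R[i]).
Local Notation "<< x , y >>" := (@inner R H x y).

Lemma innerC x y : << y, x >> = conjc << x, y >>.
Proof. exact: hinner_conj. Qed.

Lemma innerDl x y z : << x + y, z >> = << x, z >> + << y, z >>.
Proof. by have := hinner_linear 1 x y z; rewrite scale1r mul1r. Qed.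

Lemma inner0l z : << 0, z >> = 0.
Proof.
have := innerDl 0 0 z; rewrite addr0 => h.
by apply: (@addrI _ << 0, z >>); rewrite addr0 -h.
Qed.

Lemma innerZl a x z : << a *: x, z >> = a * << x, z >>.
Proof. by rewrite /inner -[a *: x]addr0 hinner_linear -/(inner 0 z) inner0l addr0. Qed.

Lemma innerDr x y z : << z, x + y >> = << z, x >> + << z, y >>.
Proof. by rewrite innerC innerDl rmorphD /= -!innerC. Qed.

Lemma innerZr a x z : << z, a *: x >> = conjc a * << z, x >>.
Proof. by rewrite innerC innerZl rmorphM /= -!innerC. Qed.

Lemma inner0r z : << z, 0 >> = 0.
Proof. by rewrite innerC inner0l conjc0. Qed.

Lemma Re_innerC x y : complex.Re << y, x >> = complex.Re << x, y >>.
Proof. by rewrite innerC; case: (<< x, y >>). Qed.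

Lemma inner_self_real x : << x, x >> = (complex.Re << x, x >>)%:C%C.
Proof.
by have := innerC x x; case: (<< x, x >>) => a b /= [] hb; congr (Complex _ _); lra.
Qed.

Lemma hnorm_ge0 x : 0 <= hnorm x.
Proof. exact: sqrtr_ge0. Qed.

Lemma hnorm_sqr x : hnorm x ^+ 2 = complex.Re << x, x >>.
Proof. by rewrite /hnorm sqr_sqrtr // hinner_pos. Qed.

Lemma hnorm_sqrD u v :
  hnorm (u + v) ^+ 2 = hnorm u ^+ 2 + hnorm v ^+ 2 + 2 * complex.Re << u, v >>.
Proof.
rewrite !hnorm_sqr innerDl !innerDr !raddfD /= (Re_innerC u v); lra.
Qed.

Lemma hnormZ_real (a : R) u : hnorm (a%:C%C *: u) = `|a| * hnorm u.
Proof.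
rewrite /hnorm innerZl innerZr conjc_real mulrA -rmorphM /=.
by rewrite (inner_self_real u) /= mul0r subr0 sqrtrM ?sqr_ge0 // sqrtr_sqr.
Qed.

Lemma cabs_ge0 w : 0 <= cabs w.
Proof. exact: sqrtr_ge0. Qed.

Lemma cabs_sqr w : cabs w ^+ 2 = complex.Re w ^+ 2 + complex.Im w ^+ 2.
Proof. by rewrite /cabs sqr_sqrtr // addr_ge0 // sqr_ge0. Qed.

Lemma cabs_conjc w : cabs (conjc w) = cabs w.
Proof. by case: w => a b; rewrite /cabs /= sqrrN. Qed.

Lemma normRe_le_cabs w : `|complex.Re w| <= cabs w.
Proof.
rewrite -ler_sqr ?nnegrE ?cabs_ge0 // real_normK ?num_real // cabs_sqr.
by rewrite lerDl sqr_ge0.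
Qed.

Lemma Re_le_cabs w : complex.Re w <= cabs w.
Proof. exact: le_trans (ler_norm _) (normRe_le_cabs w). Qed.

Lemma Re_real_mul (a : R) w : complex.Re (a%:C%C * w) = a * complex.Re w.
Proof. by case: w => p q; rewrite /= mul0r subr0. Qed.

Lemma cauchy_schwarz_sqr u v : cabs << u, v >> ^+ 2 <= hnorm u ^+ 2 * hnorm v ^+ 2.
Proof.
rewrite !hnorm_sqr; set V := complex.Re << v, v >>.
have [V0|V_neq0] := eqVneq V 0.
  have -> : v = 0 by apply: hinner_def; rewrite -/(inner v v) inner_self_real -/V V0.
  by rewrite inner0r /cabs /= expr0n /= addr0 sqrtr0 expr0n /= V0 mulr0.
have V_gt0 : 0 < V by rewrite lt_def V_neq0 hinner_pos.
(* 0 <= <V u - <u,v> v, V u - <u,v> v> = V (V <u,u> - |<u,v>|^2) *)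
have := hinner_pos (V%:C%C *: u - << u, v >> *: v).
rewrite -/(inner _ _) innerDl -scaleNr !innerZl !innerDr !innerZr.
rewrite (inner_self_real v) -/V (innerC u v) cabs_sqr.
case: (<< u, v >>) => a b; case: (<< u, u >>) => p q; simpc => /= h.
nra.
Qed.

Lemma cauchy_schwarz u v : cabs << u, v >> <= hnorm u * hnorm v.
Proof.
rewrite -ler_sqr ?nnegrE ?cabs_ge0 ?mulr_ge0 ?hnorm_ge0 //.
by rewrite exprMn cauchy_schwarz_sqr.
Qed.

Lemma hnormD u v : hnorm (u + v) <= hnorm u + hnorm v.
Proof.
rewrite -ler_sqr ?nnegrE ?addr_ge0 ?hnorm_ge0 // hnorm_sqrD sqrrD.
have := le_trans (Re_le_cabs _) (cauchy_schwarz u v); lra.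
Qed.

Lemma hnorm_sqr_real_comb (a b : R) u v :
  hnorm (a%:C%C *: u + b%:C%C *: v) ^+ 2 =
  a ^+ 2 * hnorm u ^+ 2 + b ^+ 2 * hnorm v ^+ 2 + 2 * a * b * complex.Re << u, v >>.
Proof.
rewrite hnorm_sqrD !hnormZ_real !exprMn !real_normK ?num_real //.
by rewrite innerZl innerZr conjc_real !Re_real_mul !mulrA.
Qed.

End InnerProduct.

Section Operators.
Context {R : realType} {H : HilbertSpace R}.
Implicit Types (T S : H -> H) (x y : H).
Local Notation "<< x , y >>" := (@inner R H x y).

Definition bounded_by T (M : R) := forall x, hnorm (T x) <= M * hnorm x.

Lemma bounded_linear_bounded_by T :
  bounded_linear T -> exists2 M, 0 <= M & bounded_by T M.
Proof.
move=> [_ [M hM]]; exists `|M| => // x.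
by apply: le_trans (hM x) _; rewrite ler_wpM2r ?hnorm_ge0 ?ler_norm.
Qed.

Lemma bounded_byD T S M N : bounded_by T M -> bounded_by S N ->
  bounded_by (fun x => T x + S x) (M + N).
Proof.
by move=> hT hS x; apply: le_trans (hnormD _ _) _; rewrite mulrDl lerD.
Qed.

Lemma bounded_by_comp T S M N : 0 <= M -> bounded_by T M -> bounded_by S N ->
  bounded_by (fun x => T (S x)) (M * N).
Proof.
by move=> M0 hT hS x; apply: le_trans (hT _) _; rewrite -mulrA ler_wpM2l.
Qed.

Lemma is_adjoint_sym T S : is_adjoint T S -> is_adjoint S T.
Proof. by move=> TS x y; rewrite innerC -TS -innerC. Qed.

Lemma adjoint_bounded_by T S M : 0 <= M -> is_adjoint T S -> bounded_by T M ->
  bounded_by S M.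
Proof.
move=> M0 TS hT y.
have := hnorm_ge0 (S y); have : 0 <= M * hnorm y by rewrite mulr_ge0 ?hnorm_ge0.
have : hnorm (S y) ^+ 2 <= hnorm (S y) * (M * hnorm y).
  rewrite hnorm_sqr -TS; apply: le_trans (Re_le_cabs _) _.
  apply: le_trans (cauchy_schwarz _ _) _.
  rewrite mulrA [hnorm (S y) * M]mulrC.
  by apply: ler_wpM2r; [exact: hnorm_ge0 | exact: hT].
move: (M * hnorm y) => k; nra.
Qed.

Lemma is_adjoint_real_comb T S (a b : R) : is_adjoint T S ->
  is_adjoint (fun x => a%:C%C *: T x + b%:C%C *: S x)
             (fun x => a%:C%C *: S x + b%:C%C *: T x).
Proof.
move=> TS x y; have ST := is_adjoint_sym TS.
by rewrite /= innerDl innerDr !innerZl !innerZr !conjc_real TS ST.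
Qed.

Lemma cabs_inner_sqr_le_mean T S x : is_adjoint T S -> hnorm x = 1 ->
  cabs << T x, x >> ^+ 2 <= 2^-1 * (hnorm (T x) ^+ 2 + hnorm (S x) ^+ 2).
Proof.
move=> TS x1.
have TS_cabs : cabs << T x, x >> = cabs << S x, x >>.
  by rewrite TS innerC cabs_conjc.
have := cauchy_schwarz_sqr (T x) x; have := cauchy_schwarz_sqr (S x) x.
rewrite -TS_cabs x1 expr1n !mulr1; lra.
Qed.

Lemma hnorm_sqr_real_comb_sum A S (a b : R) x : is_adjoint A S ->
  hnorm (a%:C%C *: A x + b%:C%C *: S x) ^+ 2
    + hnorm (a%:C%C *: S x + b%:C%C *: A x) ^+ 2
  = (a ^+ 2 + b ^+ 2) * complex.Re << S (A x) + A (S x), x >>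
    + 2 * a * b * complex.Re << A (A x) + S (S x), x >>.
Proof.
move=> AS; have SA := is_adjoint_sym AS.
rewrite !hnorm_sqr_real_comb !innerDl !raddfD /=.
rewrite (SA (A x)) (AS (S x)) (AS (A x)) (SA (S x)) (Re_innerC (A x) (S x)).
rewrite !hnorm_sqr; lra.
Qed.

Lemma cabs_inner_real_comb_sqr_le A S (a b : R) x :
  is_adjoint A S -> hnorm x = 1 ->
  cabs << a%:C%C *: A x + b%:C%C *: S x, x >> ^+ 2 <=
    2^-1 * (a ^+ 2 + b ^+ 2) * complex.Re << S (A x) + A (S x), x >>
    + a * b * complex.Re << A (A x) + S (S x), x >>.
Proof.
move=> AS x1.
apply: le_trans (cabs_inner_sqr_le_mean (is_adjoint_real_comb a b AS) x1) _.
rewrite hnorm_sqr_real_comb_sum //; lra.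
Qed.

Lemma opnorm_ge0 T : 0 <= opnorm T.
Proof. by apply: sup_ge0 => _ [x _ <-]; exact: hnorm_ge0. Qed.

Lemma numrad_ge0 T : 0 <= numrad T.
Proof. by apply: sup_ge0 => _ [x _ <-]; exact: cabs_ge0. Qed.

Lemma hnorm_le_opnorm T M x : bounded_by T M -> hnorm x = 1 ->
  hnorm (T x) <= opnorm T.
Proof.
move=> hT x1; apply: ub_le_sup; last by exists x.
by exists M => _ [y /= y1 <-]; rewrite -[M]mulr1 -y1 hT.
Qed.

Lemma cabs_inner_le_numrad T M x : bounded_by T M -> hnorm x = 1 ->
  cabs << T x, x >> <= numrad T.
Proof.
move=> hT x1; apply: ub_le_sup; last by exists x.
exists M => _ [y /= y1 <-]; apply: le_trans (cauchy_schwarz _ _) _.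
by rewrite y1 mulr1 -[M]mulr1 -y1 hT.
Qed.

End Operators.

Theorem theorem3p9 (R : realType) (H : HilbertSpace R) (phi psi : R -> R)
    (A Astar : H -> H) (t : R) :
  {within `[(0:R), 1]%classic, continuous phi} ->
  {within `[(0:R), 1]%classic, continuous psi} ->
  bounded_linear A ->
  is_adjoint A Astar ->
  t \in `[0, 1] ->
  omega_t phi psi A Astar t ^+ 2 <=
    2^-1 * (`|phi t| ^+ 2 + `|psi t| ^+ 2)
      * opnorm (fun x => Astar (A x) + A (Astar x))
    + `|phi t * psi t| * numrad (fun x => A (A x) + Astar (Astar x)).
Proof.
move=> _ _ /bounded_linear_bounded_by [M M0 AM] AS _.
have SM := adjoint_bounded_by M0 AS AM.
have CM := bounded_byD (bounded_by_comp M0 SM AM) (bounded_by_comp M0 AM SM).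
have BM := bounded_byD (bounded_by_comp M0 AM AM) (bounded_by_comp M0 SM SM).
apply: sup_sqr_le => [|_ [x /= x1 <-]].
  by rewrite addr_ge0 ?mulr_ge0 ?invr_ge0 ?addr_ge0 ?sqr_ge0 ?opnorm_ge0 ?numrad_ge0.
split; first exact: cabs_ge0.
apply: le_trans (cabs_inner_real_comb_sqr_le (phi t) (psi t) AS x1) _.
rewrite !real_normK ?num_real //; apply: lerD.
  rewrite ler_wpM2l ?mulr_ge0 ?invr_ge0 ?addr_ge0 ?sqr_ge0 //.
  apply: le_trans (Re_le_cabs _) _; apply: le_trans (cauchy_schwarz _ _) _.
  by rewrite x1 mulr1 (hnorm_le_opnorm CM x1).
apply: le_trans (ler_norm _) _; rewrite normrM ler_wpM2l //.
exact: le_trans (normRe_le_cabs _) (cabs_inner_le_numrad BM x1).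
Qed.
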